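(* For any graph $G$ and integers $k\ge 2$, $r\ge 3$, $R_r(\mathcal{B}(G),k)\le R(G,k)+r-2$, where $R(G,k)$ is the classical $k$-color Ramsey number of $G$.
   Context: For a graph $G$, a hypergraph $H$ is a Berge-$G$ hypergraph if there are an injective map $\phi:V(G)\to V(H)$ and pairwise distinct hyperedges $e_{xy}\in E(H)$, one for each $xy\in E(G)$, with $\phi(x),\phi(y)\in e_{xy}$. $\mathcal{B}(G)$ denotes the family of all Berge-$G$ hypergraphs. For a family $\mathcal{H}$ of $r$-uniform hypergraphs, $R_r(\mathcal{H},k)$ is the smallest $n$ such that every $k$-coloring of the hyperedges of the complete $r$-uniform hypergraph $K_n^r$ contains a monochromatic subhypergraph belonging to $\mathcal{H}$. $R(G,k)$ is the smallest $n$ such that every $k$-coloring of the edges of $K_n$ contains a monochromatic copy of $G$. *)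

From mathcomp Require Import all_boot.
Set Implicit Arguments. Unset Strict Implicit. Unset Printing Implicit Defensive.

(* Edge colourings of K_n (vertex set 'I_n) with k colours are functions
   c : {set 'I_n} -> 'I_k; only the values on 2-subsets matter.
   Likewise hyperedge colourings of K_n^r are c : {set 'I_n} -> 'I_k, only
   values on r-subsets matter. *)

Definition mono_copy (V : finType) (e : rel V) (n k : nat)
    (c : {set 'I_n} -> 'I_k) (i : 'I_k) : Prop :=
  exists f : V -> 'I_n, injective f /\
    forall x y, e x y -> c [set f x; f y] = i.

Definition ramsey_prop (V : finType) (e : rel V) (k n : nat) : Prop :=
  forall c : {set 'I_n} -> 'I_k, exists i : 'I_k, mono_copy e c i.

Definition is_ramsey_number (V : finType) (e : rel V) (k N : nat) : Prop :=
  ramsey_prop e k N /\ forall m, ramsey_prop e k m -> N <= m.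

Definition is_berge (V : finType) (e : rel V) (W : finType)
    (H : {set {set W}}) : Prop :=
  exists phi : V -> W, injective phi /\
  exists h : V -> V -> {set W},
    (forall x y, e x y ->
       [/\ h x y = h y x, h x y \in H, phi x \in h x y & phi y \in h x y]) /\
    (forall x y x' y', e x y -> e x' y' -> h x y = h x' y' ->
       [set x; y] = [set x'; y']).

Definition berge_ramsey_prop (V : finType) (e : rel V) (r k n : nat) : Prop :=
  forall c : {set 'I_n} -> 'I_k, exists i : 'I_k,
  exists H : {set {set 'I_n}},
    (forall A, A \in H -> #|A| = r /\ c A = i) /\ is_berge e H.

Definition is_berge_ramsey_number (V : finType) (e : rel V) (r k M : nat)
    : Prop :=
  berge_ramsey_prop e r k M /\ forall m, berge_ramsey_prop e r k m -> M <= m.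

From mathcomp Require Import all_boot.
From mathcomp Require Import boolp.

(* Put the first N vertices of K_{N+p} aside for a copy of K_N and pad every
   pair of them with the fixed set S of the last p vertices.  Colouring each
   pair by the colour of its padded (p+2)-set gives a monochromatic copy of G;
   the padded sets {f x, f y} + S of its edges are distinct hyperedges of that
   colour, since {f x, f y} is recovered from them by deleting S. *)

Section Padding.

Variables N p : nat.

Definition pad (A : {set 'I_N}) : {set 'I_(N + p)} :=
  lshift p @: A :|: [set rshift N j | j : 'I_p].

Lemma pad_preimset A : lshift p @^-1: pad A = A.
Proof.
apply/setP=> i; rewrite !inE mem_imset; last exact: lshift_inj.
case: (i \in A) => //=.
by apply/imsetP => -[j _ /eqP]; rewrite eq_lrshift.
Qed.

Lemma pad_inj : injective pad.
Proof. by move=> A B eqAB; rewrite -[A]pad_preimset -[B]pad_preimset eqAB. Qed.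

Lemma card_pad A : #|pad A| = #|A| + p.
Proof.
have disjoint_shifts : lshift p @: A :&: [set rshift N j | j : 'I_p] = set0.
  apply/setP=> i; rewrite !inE.
  by case: imsetP => // -[a _ ->]; case: imsetP => // -[j _ /eqP]; rewrite eq_lrshift.
rewrite cardsU disjoint_shifts cards0 subn0 !card_imset ?cardT ?size_enum_ord //.
- exact: rshift_inj.
- exact: lshift_inj.
Qed.

Lemma berge_ramsey_prop_pad (V : finType) (e : rel V) k :
  irreflexive e -> ramsey_prop e k N -> berge_ramsey_prop e p.+2 k (N + p).
Proof.
move=> eirr ramseyN c.
have [i [f [finj mono_f]]] := ramseyN (fun A => c (pad A)).
pose h x y := pad [set f x; f y].
exists i, [set h x y | x in V, y in V & e x y]; split.
- move=> _ /imset2P [x y _ + ->]; rewrite inE => exy.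
  split; last exact: mono_f.
  rewrite card_pad cards2 (inj_eq finj).
  by case: eqP exy => [-> | _]; rewrite ?eirr.
- exists (lshift p \o f); split; first by move=> x y /lshift_inj /finj.
  exists h; split.
  + move=> x y exy; split.
    * by rewrite /h setUC.
    * by apply/imset2P; exists x y; rewrite ?inE.
    * by rewrite /h /pad /= inE imset_f ?set21.
    * by rewrite /h /pad /= inE imset_f ?set22.
  + move=> x y x' y' _ _ /pad_inj eq_pairs.
    by apply: (imset_inj finj); rewrite !imsetU1 !imset_set1.
Qed.

End Padding.

Lemma least_nat_le (P : nat -> Prop) n :
  P n -> exists2 M, P M /\ (forall m, P m -> M <= m) & M <= n.
Proof.
move=> Pn; have exP : exists n, `[< P n >] by exists n; apply/asboolP.
have [M /asboolP PM minM] := find_ex_minn exP.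
by exists M; [split=> // m /asboolP /minM | apply/minM/asboolP].
Qed.

Theorem corollary1 (V : finType) (e : rel V) (k r : nat) :
  symmetric e -> irreflexive e -> 2 <= k -> 3 <= r ->
  forall N : nat, is_ramsey_number e k N ->
  exists M : nat, is_berge_ramsey_number e r k M /\ M <= N + r - 2.
Proof.
move=> _ eirr _ r_ge3 N [ramseyN _].
have r_eq : r = (r - 2).+2 by case: r r_ge3 => [|[|r]] // _; rewrite !subSS subn0.
have bound : berge_ramsey_prop e r k (N + r - 2).
  by rewrite -addnBA ?(ltnW r_ge3) // {1}r_eq; exact: berge_ramsey_prop_pad.
have [M M_least M_le] := least_nat_le (berge_ramsey_prop e r k) _ bound.
by exists M.
Qed.
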